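(* Let $\Sigma$ be a finite alphabet and let $C \subseteq \Sigma^n$ be a code with $|C|\ge 2$ and minimum Levenshtein distance $d$. Let $t_\mathsf{I}$ and $t_\mathsf{D}$ be non-negative integers with $t_\mathsf{D} \leq n$ such that $N = n + t_\mathsf{I} - t_\mathsf{D}$ is a positive integer, let $v \in \Sigma^N$ be any word, and let $\ell = |B_\mathsf{L}(v, t_\mathsf{D}, t_\mathsf{I}) \cap C|$. If $$\frac{d}{2} > t_\mathsf{D} + \frac{t_\mathsf{I}(n-t_\mathsf{D})}{N},$$ then $$\ell \leq \frac{N(d/2 - t_\mathsf{D})}{N(d/2-t_\mathsf{D})-t_\mathsf{I}(n-t_\mathsf{D})}.$$
   Context: For words $x,y$ over $\Sigma$ (possibly of different lengths), the Levenshtein distance $d_\mathsf{L}(x,y)$ is the minimum number of single-symbol insertions and deletions needed to transform $x$ into $y$. The minimum Levenshtein distance of a code $C$ is $\min\{d_\mathsf{L}(c_1,c_2): c_1\neq c_2 \in C\}$. For a word $v$ and non-negative integers $a,b$, $B_\mathsf{L}(v,a,b)$ denotes the set of all words obtainable from $v$ by at most $a$ insertions and at most $b$ deletions. *)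

From HB Require Import structures.
From mathcomp Require Import all_boot all_order all_algebra.
Set Implicit Arguments. Unset Strict Implicit. Unset Printing Implicit Defensive.

Inductive edits (T : Type) (x : seq T) : seq T -> nat -> nat -> Prop :=
| edits_refl : edits x x 0 0
| edits_ins (y u w : seq T) (a : T) (i j : nat) :
    edits x y i j -> y = u ++ w -> edits x (u ++ a :: w) i.+1 j
| edits_del (y u w : seq T) (a : T) (i j : nat) :
    edits x y i j -> y = u ++ a :: w -> edits x (u ++ w) i j.+1.

Definition transformable (T : Type) (x y : seq T) (k : nat) : Prop :=
  exists i j, i + j = k /\ edits x y i j.

Definition lev_dist_is (T : Type) (x y : seq T) (k : nat) : Prop :=
  transformable x y k /\ forall k', transformable x y k' -> k <= k'.

Definition in_lev_ball (T : Type) (v : seq T) (a b : nat) (y : seq T) : Prop :=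
  exists i j, i <= a /\ j <= b /\ edits v y i j.

Definition min_lev_dist (S : finType) (n : nat) (C : {set n.-tuple S}) (d : nat) : Prop :=
  (exists c1 c2, [/\ c1 \in C, c2 \in C, c1 != c2 & lev_dist_is (val c1) (val c2) d]) /\
  (forall c1 c2 k, c1 \in C -> c2 \in C -> c1 != c2 ->
     lev_dist_is (val c1) (val c2) k -> d <= k).

From Stdlib Require Import ClassicalEpsilon.
Definition pbool (P : Prop) : bool :=
  if excluded_middle_informative P then true else false.

From HB Require Import structures.
From mathcomp Require Import all_boot all_order all_algebra.
From mathcomp Require Import zify lra.
From Stdlib Require Import ClassicalEpsilon.
Import Order.TTheory GRing.Theory Num.Theory.
Set Implicit Arguments. Unset Strict Implicit. Unset Printing Implicit Defensive.

(* A codeword c in the ball arises from v by at most tI deletions, so it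
   contains the subword of v on a set P_c of exactly w = n - tD positions.
   Two distinct codewords a, b share the subword on P_a :&: P_b, hence
   d <= 2 (n - |P_a :&: P_b|).  Counting for each position of v the sets P_c
   containing it and applying Cauchy-Schwarz gives, for L codewords,
   (L w)^2 <= N (L w + L (L - 1) (n - d/2)), which rearranges to the bound. *)

Lemma pboolP (P : Prop) : reflect P (pbool P).
Proof. by rewrite /pbool; case: excluded_middle_informative => ?; constructor. Qed.

Lemma lev_dist_exists (T : Type) (x y : seq T) k :
  transformable x y k -> exists2 k', lev_dist_is x y k' & k' <= k.
Proof.
move=> xy_k; have ex_k : exists k, pbool (transformable x y k).
  by exists k; apply/pboolP.
case: (ex_minnP ex_k) => k' /pboolP xy_k' min_k'; exists k'; last first.
  by apply: min_k'; apply/pboolP.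
by split=> // k'' /pboolP; apply: min_k'.
Qed.

Section CommonSubsequences.
Variable T : eqType.
Implicit Types x y s u w : seq T.

Lemma subseq_delete (a : T) u w s : subseq s (u ++ a :: w) ->
  exists s', [/\ subseq s' s, subseq s' (u ++ w) & size s <= (size s').+1].
Proof.
elim: u s => [|c u IH] [|b s]; try by exists [::]; split; rewrite ?sub0seq.
- rewrite cat0s [subseq _ _]/=; case: ifP => [_ sw | _ bs].
    by exists s; split=> //; apply: subseq_cons.
  by exists (b :: s); split=> //; apply: subseq_refl.
- rewrite cat_cons [subseq _ _]/=; case: ifP => [/eqP <- | _] /IH [s' [s's s'uw le_s]].
    by exists (b :: s'); rewrite /= !eqxx.
  by exists s'; split=> //; apply: subseq_trans s'uw (subseq_cons _ _).
Qed.

Lemma edits_common_subseq x y i j : edits x y i j ->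
  exists s, [/\ subseq s x, subseq s y & size x <= size s + j].
Proof.
elim=> [|{}y u w a {}i {}j _ [s [sx sy le_s]] Ey
        |{}y u w a {}i {}j _ [s [sx sy le_s]] Ey].
- by exists x; rewrite subseq_refl addn0.
- exists s; split=> //; apply: subseq_trans sy _; rewrite {}Ey.
  by apply: cat_subseq; rewrite ?subseq_refl ?subseq_cons.
- rewrite {}Ey in sy; have [s' [s's s'uw le_s']] := subseq_delete sy.
  by exists s'; split=> //; [apply: subseq_trans s's sx | lia].
Qed.

Lemma edits_delete_to_subseq x i y : forall p s j,
  edits x (p ++ y) i j -> subseq s y -> edits x (p ++ s) i (j + (size y - size s)).
Proof.
elim: y => [|a y IH] p s j E; first by rewrite subseq0 => /eqP->; rewrite addn0.
have E' : edits x (p ++ y) i j.+1 by apply: edits_del E _.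
case: s => [|b s] /=.
  by move=> _; have := IH p [::] _ E' (sub0seq y); rewrite /= !subn0 addSnnS.
case: ifP => [/eqP -> sy | _ bsy].
  by have := IH (rcons p a) s j; rewrite -!cats1 -!catA subSS; apply.
by have := IH p _ _ E' bsy; rewrite addSnnS subSn //; apply: size_subseq bsy.
Qed.

Lemma edits_insert_from_subseq x j t : forall p s i,
  edits x (p ++ s) i j -> subseq s t -> edits x (p ++ t) (i + (size t - size s)) j.
Proof.
elim: t => [|a t IH] p s i E; first by rewrite subseq0 => /eqP Es; subst s; rewrite addn0.
case: s E => [|b s] E /=.
  move=> _; have := IH p [::] _ E (sub0seq t); rewrite /= !subn0 addnS => E'.
  exact: edits_ins E' _.
case: ifP => [/eqP <- st | _ bst].
  by have := IH (rcons p b) s i; rewrite -!cats1 -!catA subSS; apply.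
have E' := IH p _ _ E bst; rewrite subSn ?addnS; last exact: size_subseq bst.
exact: edits_ins E' _.
Qed.

Lemma common_subseq_transformable x y s : subseq s x -> subseq s y ->
  transformable x y ((size x - size s) + (size y - size s)).
Proof.
move=> sx sy; exists (size y - size s), (size x - size s); split; first exact: addnC.
have := @edits_delete_to_subseq x 0 x [::] s 0 (edits_refl x) sx.
by move/edits_insert_from_subseq => /(_ y sy).
Qed.

End CommonSubsequences.

Lemma min_lev_dist_common_subseq (S : finType) n (C : {set n.-tuple S}) d
    (c1 c2 : n.-tuple S) (s : seq S) :
  min_lev_dist C d -> c1 \in C -> c2 \in C -> c1 != c2 ->
  subseq s c1 -> subseq s c2 -> 2 * size s + d <= 2 * n.
Proof.
move=> [_ min_d] c1C c2C c1c2 sc1 sc2.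
have [k c1c2_k le_k] := lev_dist_exists (common_subseq_transformable sc1 sc2).
have := min_d _ _ _ c1C c2C c1c2 c1c2_k; have := size_subseq sc1.
rewrite !size_tuple in le_k *; set m := size s in le_k *; lia.
Qed.

Section Subwords.
Variables (S : eqType) (N : nat) (v : N.-tuple S).
Implicit Types P Q : {set 'I_N}.

Definition subword (P : {set 'I_N}) : seq S := [seq tnth v i | i <- enum P].

Lemma size_subword P : size (subword P) = #|P|.
Proof. by rewrite size_map cardE. Qed.

Lemma subword_subset P Q : P \subset Q -> subseq (subword P) (subword Q).
Proof.
move=> /subsetP PQ; apply: map_subseq; rewrite /enum_mem.
set e := Finite.enum 'I_N.
suff -> : filter (mem P) e = filter (mem P) (filter (mem Q) e) by apply: filter_subseq.
by rewrite -filter_predI; apply: eq_filter => i /=; apply/idP/andP => [/[dup]/PQ|[]].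
Qed.

Lemma subseq_subword s : subseq s v -> exists P, subword P = s.
Proof.
case/subseqP=> m; rewrite size_tuple => sz_m ->.
exists [set i : 'I_N | nth false m i].
rewrite -(map_tnth_enum v) -map_mask mask_enum_ord; congr map.
by rewrite enumT /enum_mem; apply: eq_filter => i; apply: in_set.
Qed.

End Subwords.

Lemma lev_ball_subword (S : eqType) N (v : N.-tuple S) a b (c : seq S) :
  in_lev_ball v a b c -> exists P : {set 'I_N}, #|P| = N - b /\ subseq (subword v P) c.
Proof.
move=> [i [j [_ [le_jb vc]]]].
have [s [sv sc le_s]] := edits_common_subseq vc; rewrite size_tuple in le_s.
have [P vP] := subseq_subword (subseq_trans (take_subseq s (N - b)) sv).
exists P; rewrite -(size_subword v) vP size_take; split.
  by case: ltnP => //; lia.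
exact: subseq_trans (take_subseq _ _) sc.
Qed.

Lemma sqr_sum_leq (I : finType) (f : I -> nat) :
  (\sum_i f i) ^ 2 <= #|I| * \sum_i f i ^ 2.
Proof.
have sqE : (\sum_i f i) ^ 2 = \sum_i \sum_j f i * f j.
  by rewrite -mulnn big_distrl; apply: eq_bigr => i _; rewrite big_distrr.
have sq2E : \sum_i \sum_j (f i ^ 2 + f j ^ 2) = 2 * (#|I| * \sum_i f i ^ 2).
  under eq_bigr => i _ do rewrite big_split /= sum_nat_const.
  by rewrite big_split /= sum_nat_const -big_distrr addnn -mul2n.
rewrite -(leq_pmul2l (isT : 0 < 2)) sqE -sq2E big_distrr /=.
apply: leq_sum => i _; rewrite big_distrr; apply: leq_sum => j _.
exact: nat_Cauchy.
Qed.

Lemma johnson_count (T I : finType) (B : {set T}) (F : T -> {set I}) (w n d : nat) :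
  {in B, forall c, #|F c| = w} ->
  {in B &, forall a b, a != b -> 2 * #|F a :&: F b| + d <= 2 * n} ->
  2 * #|B| * w ^ 2 + #|I| * (#|B| - 1) * d <=
    2 * #|I| * w + 2 * #|I| * (#|B| - 1) * n.
Proof.
move=> card_F meet_F; set L := #|B|.
have sum_mem (A : {set I}) : \sum_i (i \in A : nat) = #|A|.
  by rewrite -sum1_card [RHS]big_mkcond; apply: eq_bigr => i _; case: (i \in A).
pose occ i := \sum_(c in B) (i \in F c : nat).
have sum_occ : \sum_i occ i = L * w.
  rewrite exchange_big /= (eq_bigr (fun=> w)); first by rewrite sum_nat_const mulnC.
  by move=> c Bc; rewrite sum_mem card_F.
have sum_occ_sq : \sum_i occ i ^ 2 = \sum_(a in B) \sum_(b in B) #|F a :&: F b|.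
  under eq_bigr => i _ do rewrite -mulnn big_distrl /=.
  rewrite exchange_big; apply: eq_bigr => a _.
  under eq_bigr => i _ do rewrite big_distrr /=.
  rewrite exchange_big; apply: eq_bigr => b _.
  by rewrite -sum_mem; apply: eq_bigr => i _; rewrite inE mulnb.
have row a : a \in B ->
    2 * \sum_(b in B) #|F a :&: F b| + (L - 1) * d <= 2 * w + (L - 1) * (2 * n).
  move=> Ba; rewrite (bigD1 a Ba) /= setIid card_F // mulnDr -addnA leq_add2l.
  have card_B' : #|[pred b in B | b != a]| = L - 1.
    by rewrite /L (cardD1 a B) Ba addKn; apply: eq_card => b; rewrite !inE andbC.
  have : \sum_(b in B | b != a) (2 * #|F a :&: F b| + d) <= \sum_(b in B | b != a) 2 * n.
    by apply: leq_sum => b /andP [Bb ba]; apply: meet_F; rewrite // eq_sym.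
  by rewrite big_split /= -big_distrr !sum_nat_const card_B'.
have rows : 2 * \sum_i occ i ^ 2 + L * ((L - 1) * d) <= L * (2 * w + (L - 1) * (2 * n)).
  rewrite sum_occ_sq big_distrr /= -!sum_nat_const -big_split /=.
  exact: leq_sum.
have cs := sqr_sum_leq occ; rewrite sum_occ in cs.
have [-> | L_gt0] := posnP L; first by rewrite !muln0.
rewrite -(leq_pmul2l L_gt0); nia.
Qed.

Local Open Scope ring_scope.

Lemma johnson_ratio (R : realFieldType) (L N n w tI tD d : nat) :
  N = (w + tI)%N -> n = (w + tD)%N -> (0 < N)%N ->
  (2 * L * w ^ 2 + N * (L - 1) * d <= 2 * N * w + 2 * N * (L - 1) * n)%N ->
  tD%:R + tI%:R * (n%:R - tD%:R) / N%:R < d%:R / 2 :> R ->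
  L%:R <= N%:R * (d%:R / 2 - tD%:R) /
            (N%:R * (d%:R / 2 - tD%:R) - tI%:R * (n%:R - tD%:R)) :> R.
Proof.
move=> eN -> N_gt0 count; rewrite [(w + tD)%:R]natrD addrK.
rewrite -ltrBrDl ltr_pdivrMr ?ltr0n // => twh.
set h := d%:R / 2 - tD%:R in twh *.
have den_gt0 : 0 < N%:R * h - tI%:R * w%:R by rewrite subr_gt0 [N%:R * _]mulrC.
rewrite ler_pdivlMr // mulrC.
case: L count => [|K] count.
  by have := ler0n R (tI * w); rewrite natrM; lra.
move: count; rewrite subSS subn0 -(ler_nat R) eN !(natrD, natrM, natrX).
have -> : d%:R = 2 * (h + tD%:R) :> R by rewrite /h subrK mulrC divfK // pnatr_eq0.
(* Halved, the count reads (K + 1) (N h - tI w) <= N h once N = w + tI. *)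
rewrite -[K.+1]addn1 natrD; nra.
Qed.

Theorem mainTheorem1 (S : finType) (n : nat) (C : {set n.-tuple S}) (d tI tD : nat)
  (v : (n + tI - tD).-tuple S) :
  (2 <= #|C|)%N ->
  min_lev_dist C d ->
  (tD <= n)%N ->
  (0 < n + tI - tD)%N ->
  tD%:Q + tI%:Q * (n%:Q - tD%:Q) / (n + tI - tD)%N%:Q < d%:Q / 2 ->
  #|[set c in C | pbool (in_lev_ball (val v) tD tI (val c))]|%:Q <=
    (n + tI - tD)%N%:Q * (d%:Q / 2 - tD%:Q) /
    ((n + tI - tD)%N%:Q * (d%:Q / 2 - tD%:Q) - tI%:Q * (n%:Q - tD%:Q)).
Proof.
move=> _ C_dist tD_le_n N_gt0; set N := (n + tI - tD)%N in v N_gt0 *.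
set B := [set c in C | _]; set w := (n - tD)%N.
have eN : N = (w + tI)%N by rewrite /N /w; lia.
have en : n = (w + tD)%N by rewrite /w; lia.
have /fin_all_exists [F F_B] : forall c : n.-tuple S,
    exists P : {set 'I_N}, c \in B -> #|P| = w /\ subseq (subword v P) c.
  move=> c; case: (boolP (c \in B)) => [|_]; last by exists set0.
  rewrite inE => /andP [_ /pboolP /lev_ball_subword [P [card_P Pc]]].
  by exists P => _; rewrite card_P; split=> //; lia.
have card_F : {in B, forall c, #|F c| = w} by move=> c /F_B [].
have meet_F : {in B &, forall a b, a != b -> 2 * #|F a :&: F b| + d <= 2 * n}%N.
  move=> a b Ba Bb ab; rewrite -(size_subword v).
  have [Ca Cb] : a \in C /\ b \in C by move: Ba Bb; rewrite !inE => /andP [-> _] /andP [].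
  apply: min_lev_dist_common_subseq C_dist Ca Cb ab _ _.
  - by apply: subseq_trans (proj2 (F_B a Ba)); apply/subword_subset/subsetIl.
  - by apply: subseq_trans (proj2 (F_B b Bb)); apply/subword_subset/subsetIr.
have := johnson_count card_F meet_F; rewrite card_ord.
exact: johnson_ratio eN en N_gt0.
Qed.
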